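(* Let $R=(c_1,\dots,c_k)+B^\oplus$ be an atomic resimple expression. For each $j\in\{1,\dots,k\}$ let $p_j=n$ if $n\mathbf{e}_j\in B$, and $p_j=2$ if $B$ contains no element of the form $n\mathbf{e}_j$. Then the complete deterministic automaton $\mathcal{A}=\mathcal{A}_1\between\cdots\between\mathcal{A}_k$ described below accepts $\varphi^{-1}(R)$ and has exactly $\prod_{j=1}^k (c_j+p_j)$ states.
   Context: $\mathbb{N}$ includes $0$; $\mathbf{e}_j$ is the $j$-th unit vector of $\mathbb{N}^k$. For finite $B\subseteq\mathbb{N}^k$, $B^\oplus$ is the set of $\mathbb{N}$-linear combinations of elements of $B$. $B$ is free if every element of $B^\oplus$ has a unique such representation; an element is primary if it is $n\mathbf{e}_j$ with $n>0$; an atomic resimple expression is $\gamma+B^\oplus$ with $\gamma=(c_1,\dots,c_k)\in\mathbb{N}^k$ and $B$ a free basis all of whose elements are primary (so $B$ contains at most one element of the form $n\mathbf{e}_j$ for each $j$). Let $A=\{a_1,\dots,a_k\}$ and $\varphi(w)=(|w|_{a_1},\dots,|w|_{a_k})$ for $w\in A^*$. For each $j$, $\mathcal{A}_j$ is the complete deterministic automaton over the one-letter alphabet $\{a_j\}$ accepting $\{a_j^{m}: m\in S_j\}$, where $S_j=c_j+p_j\mathbb{N}$ if $p_j\mathbf{e}_j\in B$ and $S_j=\{c_j\}$ otherwise: in the first case it has states $0,1,\dots,c_j+p_j-1$, initial state $0$, transitions $i\xrightarrow{a_j}i+1$ for $i<c_j+p_j-1$ and $c_j+p_j-1\xrightarrow{a_j}c_j$,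 final state $c_j$; in the second case it has states $0,\dots,c_j$ plus a sink state, transitions $i\xrightarrow{a_j}i+1$ for $i<c_j$, $c_j\xrightarrow{a_j}$ sink, sink $\xrightarrow{a_j}$ sink, final state $c_j$. Each $\mathcal{A}_j$ is regarded as an automaton over $A$. The shuffle product of $\langle Q',A,E',I',T'\rangle$ and $\langle Q'',A,E'',I'',T''\rangle$ is $\langle Q'\times Q'',A,E,I'\times I'',T'\times T''\rangle$ with $E=\{((p',p''),a,(q',p'')):p''\in Q'',(p',a,q')\in E'\}\cup\{((p',p''),a,(p',q'')):p'\in Q',(p'',a,q'')\in E''\}$, iterated for more factors. *)

From HB Require Import structures.
From mathcomp Require Import all_boot.
Set Implicit Arguments. Unset Strict Implicit. Unset Printing Implicit Defensive.

(* Vectors of N^k are functions {ffun 'I_k -> nat}; the alphabet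
   A = {a_1,...,a_k} is 'I_k (letter a_j is j). *)

Definition primary_at k (j : 'I_k) (v : {ffun 'I_k -> nat}) : bool :=
  (0 < v j) && [forall i, (i != j) ==> (v i == 0)].

Definition primary k (v : {ffun 'I_k -> nat}) : Prop := exists j, primary_at j v.

(* N-linear combination of the elements of B (a finite set given as a uniq seq) *)
Definition comb k (B : seq {ffun 'I_k -> nat}) (l : 'I_(size B) -> nat) (i : 'I_k) : nat :=
  \sum_(b < size B) l b * (nth [ffun => 0] B b) i.

Definition free k (B : seq {ffun 'I_k -> nat}) : Prop :=
  uniq B /\
  forall l m : 'I_(size B) -> nat, (forall i, comb l i = comb m i) -> forall b, l b = m b.

Definition atomic_resimple k (gamma : 'I_k -> nat) (B : seq {ffun 'I_k -> nat}) : Prop :=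
  free B /\ (forall v, v \in B -> primary v).

Definition in_expr k (gamma : 'I_k -> nat) (B : seq {ffun 'I_k -> nat}) (v : 'I_k -> nat) : Prop :=
  exists l : 'I_(size B) -> nat, forall i, v i = gamma i + comb l i.

Definition phi k (w : seq 'I_k) : 'I_k -> nat := fun j => count_mem j w.

Record aut (A : finType) := Aut {
  st : finType;
  edge : st -> A -> st -> bool;
  init : pred st;
  fin : pred st }.
Arguments edge {A} a _ _ _ : rename.
Arguments init {A} a _ : rename.
Arguments fin {A} a _ : rename.

Fixpoint accept_from (A : finType) (M : aut A) (q : st M) (w : seq A) : bool :=
  match w with
  | [::] => fin M q
  | a :: w' => [exists q', edge M q a q' && @accept_from A M q' w']
  end.

Definition accepts (A : finType) (M : aut A) (w : seq A) : bool :=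
  [exists q, init M q && @accept_from A M q w].

Definition complete_deterministic (A : finType) (M : aut A) : Prop :=
  #|[pred q | init M q]| = 1 /\ forall q a, #|[pred q' | edge M q a q']| = 1.

(* The period of direction j: Some n if n e_j \in B, None otherwise *)
Definition period k (B : seq {ffun 'I_k -> nat}) (j : 'I_k) : option nat :=
  ohead [seq (v : {ffun 'I_k -> nat}) j | v <- B & primary_at j v].

Definition aut_j k (j : 'I_k) (c : nat) (per : option nat) : aut 'I_k :=
  match per with
  | Some p =>
      @Aut _ 'I_(c + p)
        (fun q a q' => (a == j) &&
           (val q' == (if val q < c + p - 1 then (val q).+1 else c)))
        (fun q => val q == 0) (fun q => val q == c)
  | None =>
      (* states 0..c, and the sink state c+1 *)
      @Aut _ 'I_(c + 2)
        (fun q a q' => (a == j) &&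
           (val q' == (if val q < c then (val q).+1 else c + 1)))
        (fun q => val q == 0) (fun q => val q == c)
  end.

Definition shuffle (A : finType) k (Ms : 'I_k -> aut A) : aut A :=
  @Aut A {dffun forall j : 'I_k, st (Ms j)}
    (fun p a q => [exists j, edge (Ms j) (p j) a (q j) &&
                             [forall i, (i != j) ==> (q i == p i)]])
    (fun p => [forall j, init (Ms j) (p j)])
    (fun p => [forall j, fin (Ms j) (p j)]).

Definition theA k (gamma : 'I_k -> nat) (B : seq {ffun 'I_k -> nat}) : aut 'I_k :=
  shuffle (fun j => aut_j j (gamma j) (period B j)).

From HB Require Import structures.
From mathcomp Require Import all_boot zify.
Set Implicit Arguments. Unset Strict Implicit. Unset Printing Implicit Defensive.

(* Each A_j is a deterministic counter: it moves only on a_j, and after n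
   moves from its initial state it is final iff n lies in S_j.  In the shuffle
   product exactly the component of the letter read moves, so the product is
   complete deterministic and, after reading w, its j-th component has made
   |w|_{a_j} moves; hence it accepts w iff |w|_{a_j} is in S_j for every j.
   As B is free and consists of primary vectors, it contains at most one
   vector p e_j per axis, so gamma + B^+ is exactly the product of the sets
   S_j.  The states of the product are tuples of states, whence the product
   of the c_j + p_j. *)

Definition counts (A : finType) (a : A) (M : aut A) (S : pred nat) : Prop :=
  exists (q0 : st M) (next : st M -> st M),
  [/\ forall q, init M q = (q == q0),
      forall q b q', edge M q b q' = (b == a) && (q' == next q) &
      forall n, fin M (iter n next q0) = S n].

Lemma accept_from_foldl (A : finType) (M : aut A) (step : st M -> A -> st M) :
    (forall q a q', edge M q a q' = (q' == step q a)) ->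
  forall q w, accept_from q w = fin M (foldl step q w).
Proof.
move=> edge_step q w; elim: w q => [// | a w IHw] q.
have -> : accept_from q (a :: w) = [exists q', edge M q a q' && accept_from q' w] by [].
apply/existsP/idP => [[q' /andP[]] | q_acc].
  by rewrite edge_step => /eqP->; rewrite IHw.
by exists (step q a); rewrite edge_step eqxx IHw.
Qed.

Section ShuffleOfCounters.
Variables (k : nat) (Ms : 'I_k -> aut 'I_k).
Variables (q0 : forall j, st (Ms j)) (next : forall j, st (Ms j) -> st (Ms j)).
Hypothesis init_Ms : forall j q, init (Ms j) q = (q == q0 j).
Hypothesis edge_Ms : forall j q a q', edge (Ms j) q a q' = (a == j) && (q' == next q).

Definition shuffle_init : st (shuffle Ms) := @finfun _ (fun j => st (Ms j)) q0.

Definition shuffle_step (q : st (shuffle Ms)) (a : 'I_k) : st (shuffle Ms) :=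
  @finfun _ (fun j => st (Ms j)) (fun j => if j == a then next (q j) else q j).

Lemma init_shuffle q : init (shuffle Ms) q = (q == shuffle_init).
Proof.
apply/forallP/eqP => [q_init | ->] /=; last by move=> j; rewrite ffunE init_Ms.
by apply/ffunP => j; rewrite ffunE; apply/eqP; rewrite -init_Ms.
Qed.

Lemma edge_shuffle q a q' : edge (shuffle Ms) q a q' = (q' == shuffle_step q a).
Proof.
apply/idP/eqP => /= [/existsP[j /andP[]] | ->].
  rewrite edge_Ms => /andP[/eqP-> /eqP q'a] /forallP q'_other.
  apply/ffunP => i; rewrite ffunE; case: eqP => [-> // | /eqP ia].
  by apply/eqP; move/implyP: (q'_other i); apply.
apply/existsP; exists a; rewrite edge_Ms ffunE !eqxx /=.
by apply/forallP => i; apply/implyP => ia; rewrite ffunE (negbTE ia).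
Qed.

Lemma shuffle_complete_deterministic : complete_deterministic (shuffle Ms).
Proof.
split; first by apply: (@eq_card1 _ shuffle_init) => q; rewrite !inE init_shuffle.
by move=> q a; apply: (@eq_card1 _ (shuffle_step q a)) => q'; rewrite !inE edge_shuffle.
Qed.

Lemma foldl_shuffle_step q w j :
  foldl shuffle_step q w j = iter (count_mem j w) (@next j) (q j).
Proof.
elim: w q => [// | a w IHw] q /=.
by rewrite IHw ffunE eq_sym; case: eqP => [<- | _]; rewrite ?iterSr.
Qed.

Lemma accepts_shuffle w :
  accepts (shuffle Ms) w = [forall j, fin (Ms j) (iter (count_mem j w) (@next j) (q0 j))].
Proof.
apply/existsP/forallP => [[q /andP[]] | w_acc].
  rewrite init_shuffle (accept_from_foldl edge_shuffle) => /eqP-> /forallP w_acc j.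
  by have := w_acc j; rewrite foldl_shuffle_step ffunE.
exists shuffle_init; rewrite init_shuffle eqxx (accept_from_foldl edge_shuffle) /=.
by apply/forallP => j; rewrite foldl_shuffle_step ffunE.
Qed.

End ShuffleOfCounters.

Lemma shuffle_counts k (Ms : 'I_k -> aut 'I_k) (S : 'I_k -> pred nat) :
  (forall j, counts j (Ms j) (S j)) ->
  complete_deterministic (shuffle Ms) /\
  forall w, accepts (shuffle Ms) w = [forall j, S j (count_mem j w)].
Proof.
move=> Ms_counts.
have [q0 /fin_all_exists[next Ms_spec]] := fin_all_exists Ms_counts.
have init_Ms j := let: And3 init_j _ _ := Ms_spec j in init_j.
have edge_Ms j := let: And3 _ edge_j _ := Ms_spec j in edge_j.
split; first exact: shuffle_complete_deterministic init_Ms edge_Ms.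
move=> w; rewrite (accepts_shuffle init_Ms edge_Ms).
by apply: eq_forallb => j; case: (Ms_spec j).
Qed.

Lemma card_shuffle (A : finType) k (Ms : 'I_k -> aut A) :
  #|st (shuffle Ms)| = \prod_(j < k) #|st (Ms j)|.
Proof. by rewrite card_dep_ffun foldrE big_map big_enum. Qed.

Definition counter_aut (A : finType) (a : A) N (f : nat -> nat) c : aut A :=
  @Aut A 'I_N (fun q b q' => (b == a) && (val q' == f (val q)))
    (fun q => val q == 0) (fun q => val q == c).

Lemma counts_counter_aut (A : finType) (a : A) N f c (S : pred nat) :
    0 < N -> (forall n, n < N -> f n < N) -> (forall n, S n = (iter n f 0 == c)) ->
  counts a (counter_aut a N f c) S.
Proof.
move=> N_gt0 f_lt S_iter.
pose step (q : 'I_N) := Ordinal (f_lt _ (ltn_ord q)).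
have val_iter n : val (iter n step (Ordinal N_gt0)) = iter n f 0.
  by elim: n => //= n ->.
exists (Ordinal N_gt0), step; split=> [q | // | n] /=; last by rewrite val_iter S_iter.
by apply/eqP/eqP => [q0 | -> //]; apply: val_inj.
Qed.

Definition lasso_step c p n := if n < c + p - 1 then n.+1 else c.

Definition sink_step c n := if n < c then n.+1 else c + 1.

Lemma iter_lasso_step c p n :
  0 < p -> iter n (lasso_step c p) 0 = if n < c then n else c + (n - c) %% p.
Proof.
move=> p_gt0; elim: n => [| n IHn] /=; first by case: c => //; rewrite mod0n.
rewrite IHn /lasso_step; case: (ltnP n c) => [n_lt_c | c_le_n].
  have -> : n < c + p - 1 by lia.
  by case: (ltngtP n.+1 c) => [| | <-]; rewrite ?subnn ?mod0n; lia.
have -> : (n.+1 < c) = false by lia.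
rewrite subSn // -[(n - c).+1]addn1 -modnDml.
have := ltn_pmod (n - c) p_gt0; set r := (n - c) %% p => r_lt_p.
case: (ltnP (c + r) (c + p - 1)) => r_small.
  by rewrite modn_small; lia.
have -> : r + 1 = p by lia.
by rewrite modnn addn0.
Qed.

Lemma iter_sink_step c n : iter n (sink_step c) 0 = if n <= c then n else c + 1.
Proof.
elim: n => [| n IHn] //=; rewrite IHn /sink_step.
case: (leqP n c) => [// | c_lt_n].
by rewrite ltnNge leq_addr ltnNge (ltnW c_lt_n).
Qed.

Definition linset c (per : option nat) : pred nat := fun n =>
  if per is Some p then (c <= n) && (p %| n - c) else n == c.

Lemma counts_aut_j k (j : 'I_k) c per :
  (forall p, per = Some p -> 0 < p) -> counts j (aut_j j c per) (linset c per).
Proof.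
case: per => [p | ] per_gt0.
  have p_gt0 := per_gt0 p erefl.
  change (counts j (counter_aut j (c + p) (lasso_step c p) c) (linset c (Some p))).
  apply: counts_counter_aut => [| n | n /=]; first lia.
    by rewrite /lasso_step; case: ifP; lia.
  rewrite iter_lasso_step //; case: ltnP => [n_lt_c | c_le_n]; first lia.
  by rewrite -[X in _ == X]addn0 eqn_add2l.
change (counts j (counter_aut j (c + 2) (sink_step c) c) (linset c None)).
apply: counts_counter_aut => [| n | n /=]; first lia.
  by rewrite /sink_step; case: ifP; lia.
by rewrite iter_sink_step; case: leqP; lia.
Qed.

Lemma card_aut_j k (j : 'I_k) c per : #|st (aut_j j c per)| = c + odflt 2 per.
Proof. by case: per => [p |] /=; rewrite card_ord. Qed.

Section PrimaryVectors.
Variable k : nat.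
Implicit Types (u : {ffun 'I_k -> nat}) (i j : 'I_k).

Lemma primary_at_gt0 u j : primary_at j u -> 0 < u j.
Proof. by case/andP. Qed.

Lemma primary_at_eq0 u i j : primary_at j u -> i != j -> u i = 0.
Proof. by case/andP=> _ /forallP u_off ij; apply/eqP; move/implyP: (u_off i); apply. Qed.

Lemma primary_at_inj u i j : primary_at i u -> primary_at j u -> i = j.
Proof.
move=> u_i u_j; apply/eqP; apply: contraTT (primary_at_gt0 u_i) => ij.
by rewrite (primary_at_eq0 u_j ij).
Qed.

Lemma primary_atE u j : primary_at j u -> u = [ffun i => if i == j then u j else 0].
Proof.
move=> u_j; apply/ffunP => i; rewrite ffunE.
by case: eqP => [-> // | /eqP ij]; rewrite (primary_at_eq0 u_j ij).
Qed.

Lemma primary_at_scaled_unit j n :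
  0 < n -> primary_at j [ffun i => if i == j then n else 0].
Proof.
move=> n_gt0; rewrite /primary_at ffunE eqxx n_gt0.
by apply/forallP => i; apply/implyP => ij; rewrite ffunE (negbTE ij).
Qed.

End PrimaryVectors.

Section AtomicBasis.
Variables (k : nat) (B : seq {ffun 'I_k -> nat}).
Local Notation elt b := (nth [ffun => 0] B b).

Variant period_spec (i : 'I_k) : option nat -> Prop :=
  | PeriodSome (b : 'I_(size B)) of primary_at i (elt b) : period_spec i (Some (elt b i))
  | PeriodNone of (forall b : 'I_(size B), ~~ primary_at i (elt b)) : period_spec i None.

Lemma periodP i : period_spec i (period B i).
Proof.
rewrite /period; case def_s: [seq v <- B | primary_at i v] => [| u s] /=.
  apply: PeriodNone => b; apply: contraT; rewrite negbK => b_i.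
  have : elt b \in [seq v <- B | primary_at i v] by rewrite mem_filter b_i mem_nth.
  by rewrite def_s.
have : u \in [seq v <- B | primary_at i v] by rewrite def_s mem_head.
rewrite mem_filter => /andP[u_i uB].
have u_idx : index u B < size B by rewrite index_mem.
by rewrite -(nth_index [ffun => 0] uB) in u_i *; exact: (@PeriodSome i (Ordinal u_idx) u_i).
Qed.

Lemma period_gt0 i p : period B i = Some p -> 0 < p.
Proof. by case: periodP => // b b_i [<-]; apply: primary_at_gt0. Qed.

Lemma odflt_periodE i p :
    (forall n, 0 < n -> [ffun x => if x == i then n else 0] \in B -> p = n) ->
    ((forall n, 0 < n -> [ffun x => if x == i then n else 0] \notin B) -> p = 2) ->
  p = odflt 2 (period B i).
Proof.
move=> p_axis p_no_axis; case: periodP => [b b_i | no_i] /=.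
  by apply: p_axis; rewrite ?primary_at_gt0 // -(primary_atE b_i) mem_nth.
apply: p_no_axis => n n_gt0; apply/negP => /(nthP [ffun => 0])[b b_lt b_def].
by have := no_i (Ordinal b_lt); rewrite /= b_def primary_at_scaled_unit.
Qed.

Hypothesis primB : forall v, v \in B -> primary v.
Hypothesis freeB : free B.

Lemma primary_at_of_coord (b : 'I_(size B)) i : elt b i != 0 -> primary_at i (elt b).
Proof.
have [j b_j] := primB (mem_nth [ffun => 0] (ltn_ord b)).
by apply: contraNT => b_not_i; rewrite (primary_at_eq0 b_j) //; apply: contraNneq b_not_i => ->.
Qed.

(* Two basis vectors on the same axis are proportional, which freeness forbids. *)
Lemma primary_at_elt_inj i (b b' : 'I_(size B)) :
  primary_at i (elt b) -> primary_at i (elt b') -> b = b'.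
Proof.
move=> b_i b'_i; apply/eqP; apply: contraT => bb'.
pose l (b0 : 'I_(size B)) n (x : 'I_(size B)) := if x == b0 then n else 0.
have comb_l b0 n x : comb (l b0 n) x = n * elt b0 x.
  rewrite /comb (bigD1 b0) //= /l eqxx big1 ?addn0 // => y /negbTE y_b0.
  by rewrite /l y_b0.
have comb_eq x : comb (l b (elt b' i)) x = comb (l b' (elt b i)) x.
  rewrite !comb_l; case: (eqVneq x i) => [-> | xi]; first exact: mulnC.
  by rewrite (primary_at_eq0 b_i xi) (primary_at_eq0 b'_i xi) !muln0.
have := freeB.2 _ _ comb_eq b; rewrite /l eqxx (negbTE bb') => /eqP.
by rewrite eqn0Ngt primary_at_gt0.
Qed.

Lemma comb_primary_at (l : 'I_(size B) -> nat) i (b : 'I_(size B)) :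
  primary_at i (elt b) -> comb l i = l b * elt b i.
Proof.
move=> b_i; rewrite /comb (bigD1 b) //= big1 ?addn0 // => b' b'b.
case: (eqVneq (elt b' i) 0) => [-> | /primary_at_of_coord b'_i]; first exact: muln0.
by rewrite (primary_at_elt_inj b'_i b_i) eqxx in b'b.
Qed.

Lemma comb_no_primary_at (l : 'I_(size B) -> nat) i :
  (forall b : 'I_(size B), ~~ primary_at i (elt b)) -> comb l i = 0.
Proof.
move=> no_i; rewrite /comb big1 // => b _.
case: (eqVneq (elt b i) 0) => [-> | /primary_at_of_coord b_i]; first exact: muln0.
by have := no_i b; rewrite b_i.
Qed.

Lemma in_exprP (gamma v : 'I_k -> nat) :
  in_expr gamma B v <-> forall i, linset (gamma i) (period B i) (v i).
Proof.
split=> [[l v_def] i | v_lin].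
  rewrite v_def; case: periodP => [b b_i | no_i] /=.
    by rewrite (comb_primary_at _ b_i) leq_addr addKn dvdn_mull.
  by rewrite comb_no_primary_at // addn0.
pose l b := if [pick i | primary_at i (elt b)] is Some i
            then (v i - gamma i) %/ elt b i else 0.
exists l => i; have := v_lin i; case: periodP => [b b_i | no_i] /=.
  case/andP=> gamma_le_v dvd_v; rewrite (comb_primary_at _ b_i) /l.
  case: pickP => [j b_j | /(_ i)]; last by rewrite b_i.
  by rewrite -(primary_at_inj b_i b_j) divnK // subnKC.
by rewrite comb_no_primary_at // addn0 => /eqP.
Qed.

End AtomicBasis.

Theorem mainTheorem5 (k : nat) (gamma : 'I_k -> nat) (B : seq {ffun 'I_k -> nat})
  (p : 'I_k -> nat) :
  atomic_resimple gamma B ->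
  (forall (j : 'I_k) (n : nat), 0 < n -> [ffun i => if i == j then n else 0] \in B ->
     p j = n) ->
  (forall j : 'I_k, (forall n : nat, 0 < n -> [ffun i => if i == j then n else 0] \notin B) ->
     p j = 2) ->
  complete_deterministic (theA gamma B) /\
  (forall w : seq 'I_k, accepts (theA gamma B) w <-> in_expr gamma B (phi w)) /\
  #|st (theA gamma B)| = \prod_(j < k) (gamma j + p j).
Proof.
move=> [freeB primB] p_axis p_no_axis.
have [cdA acceptsA] := shuffle_counts
  (fun j => counts_aut_j j (gamma j) (@period_gt0 _ B j)).
split; first exact: cdA.
split=> [w | ].
  by rewrite /theA acceptsA (in_exprP primB freeB); split=> /forallP.
rewrite card_shuffle; apply: eq_bigr => j _.
by rewrite card_aut_j -(odflt_periodE (p_axis j) (p_no_axis j)).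
Qed.
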